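(* Let $G$ be a graph of order $n$ with minimum degree $\delta$ and let $\mu=\mu(G)$. If $(x_1,\ldots,x_n)$ is a unit eigenvector of the adjacency matrix of $G$ for the eigenvalue $\mu$, then \[ \min\{x_1,\ldots,x_n\}\leq\sqrt{\frac{\delta}{\mu^2+\delta n-\delta^2}}. \]
   Context: All graphs are finite and simple; $\mu(G)$ denotes the largest eigenvalue of the adjacency matrix of $G$; vertices of $G$ are identified with $1,\ldots,n$ and the eigenvector is indexed by vertices. *)

From HB Require Import structures.
From mathcomp Require Import all_boot all_order all_algebra.
From mathcomp Require Import reals.
Set Implicit Arguments. Unset Strict Implicit. Unset Printing Implicit Defensive.
Import Order.TTheory GRing.Theory Num.Theory.
Local Open Scope ring_scope.

Definition simple_graph (n : nat) (e : rel 'I_n) : Prop :=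
  irreflexive e /\ symmetric e.

Definition deg (n : nat) (e : rel 'I_n) (i : 'I_n) : nat := #|[set j | e i j]|.

(* Minimum degree (default value n is irrelevant for n >= 1, since degrees < n). *)
Definition mindeg (n : nat) (e : rel 'I_n) : nat :=
  \big[minn/n]_(i : 'I_n) deg e i.

Definition adjmx (R : nzRingType) (n : nat) (e : rel 'I_n) : 'M[R]_n :=
  \matrix_(i, j) (e i j)%:R.

Definition is_largest_eig (R : realType) (n : nat) (e : rel 'I_n) (mu : R) : Prop :=
  eigenvalue (adjmx R e) mu /\ (forall a : R, eigenvalue (adjmx R e) a -> a <= mu).

From HB Require Import structures.
From mathcomp Require Import all_boot all_order all_algebra.
From mathcomp Require Import reals.
From mathcomp Require Import ring lra.
Set Implicit Arguments. Unset Strict Implicit. Unset Printing Implicit Defensive.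
Import Order.TTheory GRing.Theory Num.Theory.
Local Open Scope ring_scope.

(* Let u be a vertex of minimum degree d and m the smallest entry of x, which
   we may take positive.  The eigenvalue equation at u and Cauchy-Schwarz give
   mu^2 m^2 <= mu^2 x_u^2 = (sum_{v ~ u} x_v)^2 <= d * sum_{v ~ u} x_v^2, while
   each of the n - d non-neighbours of u contributes at least m^2 to the
   remaining mass of the unit vector.  Hence
   mu^2 m^2 + d (n - d) m^2 <= d (sum_{v ~ u} x_v^2 + sum_{v !~ u} x_v^2) = d. *)

Lemma sqr_sum_le_card_sum_sqr (R : realFieldType) (I : finType) (P : pred I)
    (a : I -> R) :
  (\sum_(i | P i) a i) ^+ 2 <= #|P|%:R * \sum_(i | P i) a i ^+ 2.
Proof.
set S := \sum_(i | P i) a i; set k : R := #|P|%:R.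
have [P0 | Ppos] := posnP #|P|.
  have -> : S = 0 by rewrite /S big_pred0 // => i; have := card0_eq P0 i.
  by rewrite expr0n /k P0 mul0r.
have var_ge0 : 0 <= \sum_(i | P i) (k * a i - S) ^+ 2.
  by apply: sumr_ge0 => i _; exact: sqr_ge0.
have var_expand : \sum_(i | P i) (k * a i - S) ^+ 2 =
    k * (k * \sum_(i | P i) a i ^+ 2 - S ^+ 2).
  rewrite (eq_bigr (fun i => k ^+ 2 * a i ^+ 2 - (2 * k * S) * a i + S ^+ 2));
    last by move=> i _; ring.
  by rewrite big_split /= sumrB -!mulr_sumr sumr_const -/S /k -mulr_natr; ring.
rewrite var_expand pmulr_rge0 ?ltr0n // in var_ge0.
by rewrite -subr_ge0.
Qed.

Lemma exists_deg_eq_mindeg (n : nat) (e : rel 'I_n.+1) :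
  exists u, deg e u = mindeg e.
Proof.
exists [arg min_(i < ord0) deg e i].
rewrite /mindeg (@bigmin_eq_arg _ nat _ _ ord0) // => i _.
by rewrite leEnat; exact: leq_trans (max_card _) (eq_leq (card_ord _)).
Qed.

Lemma adjmx_eigen_row (R : nzRingType) (n : nat) (e : rel 'I_n) (mu : R)
    (x : 'cV[R]_n) (u : 'I_n) :
  adjmx R e *m x = mu *: x -> mu * x u 0 = \sum_(v | e u v) x v 0.
Proof.
move=> /(congr1 (fun y : 'cV_n => y u 0)); rewrite !mxE => <-.
rewrite [RHS]big_mkcond; apply: eq_bigr => v _; rewrite mxE.
by case: (e u v); rewrite ?mul1r ?mul0r.
Qed.

Lemma sqr_min_entry_mul_le_deg (R : realFieldType) (n : nat) (e : rel 'I_n)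
    (mu : R) (x : 'cV[R]_n) (u : 'I_n) (m : R) :
  adjmx R e *m x = mu *: x -> \sum_(i < n) x i 0 ^+ 2 = 1 ->
  0 <= m -> (forall i, m <= x i 0) ->
  m ^+ 2 * (mu ^+ 2 + (deg e u)%:R * n%:R - (deg e u)%:R ^+ 2) <= (deg e u)%:R.
Proof.
move=> eig unit m_ge0 m_min.
have sqr_min_le i : m ^+ 2 <= x i 0 ^+ 2.
  by rewrite lerXn2r ?nnegrE ?(le_trans m_ge0).
set k : R := (deg e u)%:R.
set A := \sum_(v | e u v) x v 0 ^+ 2; set B := \sum_(v | ~~ e u v) x v 0 ^+ 2.
have mass : A + B = 1 by rewrite -unit [RHS](bigID (e u)).
have card_nbhd : #|e u|%:R = k by rewrite /k /deg cardsE.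
have nbhd : mu ^+ 2 * m ^+ 2 <= k * A.
  rewrite -card_nbhd.
  apply: le_trans (sqr_sum_le_card_sum_sqr (e u) (fun v => x v 0)).
  by rewrite -(adjmx_eigen_row u eig) exprMn ler_wpM2l ?sqr_ge0.
have card_non_nbhd : #|predC (e u)|%:R = n%:R - k :> R.
  rewrite -card_nbhd -[n in _ = n%:R - _](card_ord n) -(cardC (e u)).
  by rewrite natrD addrC addKr.
have non_nbhd : (n%:R - k) * m ^+ 2 <= B.
  by rewrite -card_non_nbhd mulr_natl -sumr_const; apply: ler_sum.
have := ler_wpM2l (ler0n _ (deg e u)) non_nbhd.
by rewrite -[leRHS]mulr1 -mass; nra.
Qed.

Theorem lemma1 (R : realType) (n : nat) (e : rel 'I_n) (mu : R) (x : 'cV[R]_n) :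
  simple_graph e ->
  is_largest_eig e mu ->
  (* the right-hand side is well defined (excludes the edgeless graph, where it is 0/0) *)
  0 < mu ^+ 2 + (mindeg e)%:R * n%:R - (mindeg e)%:R ^+ 2 ->
  adjmx R e *m x = mu *: x ->
  \sum_(i < n) x i 0 ^+ 2 = 1 ->
  exists i : 'I_n,
    x i 0 <= Num.sqrt ((mindeg e)%:R / (mu ^+ 2 + (mindeg e)%:R * n%:R - (mindeg e)%:R ^+ 2)).
Proof.
case: n e x => [|n] e x _ _ D_gt0 eig unit.
  by move: unit; rewrite big_ord0 => /eqP; rewrite eq_sym oner_eq0.
set m0 := [arg min_(i < ord0) x i 0]%O; exists m0.
have m_min i : x m0 0 <= x i 0 by rewrite /m0; case: arg_minP => // j _; apply.
have [m_le0 | m_gt0] := lerP (x m0 0) 0; first exact: le_trans m_le0 (sqrtr_ge0 _).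
have m_ge0 := ltW m_gt0.
have [u deg_u] := exists_deg_eq_mindeg e; rewrite -deg_u in D_gt0 *.
rewrite -[x m0 0]ger0_norm // -sqrtr_sqr ler_sqrt ?divr_ge0 ?(ltW D_gt0) //.
rewrite ler_pdivlMr //.
exact: sqr_min_entry_mul_le_deg eig unit m_ge0 m_min.
Qed.
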